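(* Let $p$ be an odd prime, $v\in\mathbb{N}$ and $z\in\mathbb{Z}\setminus\{0,-1\}$. Let $c_v,\tilde c_v$ be defined by $c_0=\tilde c_0=1$ and, for $v\ge1$, $c_v=\frac{1}{z}\sum_{j=1}^{v}e_j^{(2v-1)}c_{v-j}$ and $\tilde c_v=-\frac{1}{z+1}\sum_{j=1}^{v}e_j^{(2v-1)}\tilde c_{v-j}$. If $\gcd(p,z)=1$ then $$\sum_{k=0}^{p-1}(2k+1)^{2v}D_k(z)\equiv c_v\left(\frac{-z}{p}\right)\pmod p,$$ and if $\gcd(p,z+1)=1$ then $$\sum_{k=0}^{p-1}(-1)^k(2k+1)^{2v}D_k(z)\equiv \tilde c_v\left(\frac{z+1}{p}\right)\pmod p.$$
   Context: $D_n(z)=\sum_{k=0}^{n}\binom{n}{k}\binom{n+k}{k}z^k$ (Delannoy polynomials). For $s\in\mathbb{N}$ and $1\le j\le\lfloor (s+1)/2\rfloor$, $e_j^{(s)}=\binom{s}{2j}2^{2j-1}+\binom{s}{2j-1}2^{2j-2}$. $\left(\frac{\cdot}{p}\right)$ is the Legendre symbol. A congruence $a/b\equiv c\pmod p$ with $p\nmid b$ means $a\equiv bc\pmod p$; the denominators of $c_v$ (resp. $\tilde c_v$) at the integer $z$ divide a power of $z$ (resp. $z+1$). *)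

From mathcomp Require Import all_boot all_order all_algebra.
Set Implicit Arguments. Unset Strict Implicit. Unset Printing Implicit Defensive.
Import Order.TTheory GRing.Theory Num.Theory.
Local Open Scope ring_scope.

Definition delannoy (n : nat) (z : int) : int :=
  \sum_(k < n.+1) ('C(n, k) * 'C(n + k, k))%:R * z ^+ k.

(* e_j^{(s)} = C(s,2j) 2^{2j-1} + C(s,2j-1) 2^{2j-2}  (used for j >= 1). *)
Definition ecoef (j s : nat) : nat :=
  ('C(s, 2 * j) * 2 ^ (2 * j - 1) + 'C(s, 2 * j - 1) * 2 ^ (2 * j - 2))%N.

(* Given the list s = [c_0; ...; c_{v-1}] (v = size s), compute
   c_v = w * sum_{j=1}^{v} e_j^{(2v-1)} c_{v-j}. *)
Definition c_step (w : rat) (s : seq rat) : rat :=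
  let v := size s in
  w * \sum_(1 <= j < v.+1) (ecoef j (2 * v - 1))%:R * s`_(v - j).

Fixpoint cs (w : rat) (n : nat) : seq rat :=
  if n is n'.+1 then rcons (cs w n') (c_step w (cs w n')) else [:: 1].

Definition cc (z : int) (v : nat) : rat := (cs (z%:~R)^-1 v)`_v.
Definition cct (z : int) (v : nat) : rat := (cs (- ((z + 1)%:~R)^-1) v)`_v.

Definition legendre (a : int) (p : nat) : int :=
  if (p%:Z %| a)%Z then 0
  else if [exists x : 'I_p, (p%:Z %| (x%:Z) ^+ 2 - a)%Z] then 1 else -1.

(* Congruence of rationals modulo p (p-adic sense): p divides the
   numerator of x - y in lowest terms. *)
Definition ratcong (p : nat) (x y : rat) : Prop := (p%:Z %| numq (x - y))%Z.

(** Write x_k = 2k+1 and S_v = sum_(k<p) x_k^(2v) D_k(z).  Summing the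
    three-term recurrence (n+2) D_(n+2) + (n+1) D_n = (2z+1)(2n+3) D_(n+1)
    against x_k^(2v+1) by parts leaves a boundary term with the factor p, and
    the expansion of (x+1)(x+2)^(2v+1) + (x-1)(x-2)^(2v+1), whose coefficients
    are the e_j^(2v+1), turns the remaining sum into the recursion
    z S_(v+1) = sum_j e_(j+1)^(2v+1) S_(v-j) modulo p.  The same recursion,
    scaled by z^v, produces the integers z^v c_v, so z^v S_v = z^v c_v S_0 mod p.
    Finally S_0 = sum_j C(2j,j) C(p+j,2j+1) z^j, where only j = (p-1)/2
    survives modulo p, is (-z)^((p-1)/2), the Legendre symbol by Euler's
    criterion.  The alternating sums follow from D_k(-1-z) = (-1)^k D_k(z). *)

From mathcomp Require Import all_boot all_order all_algebra cyclic finfield.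
From mathcomp Require Import zify ring.
Set Implicit Arguments. Unset Strict Implicit. Unset Printing Implicit Defensive.
Import Order.TTheory GRing.Theory Num.Theory.

(** * Binomial identities *)

Lemma mul_bin_trinomial k j : 'C(k, j) * 'C(k + j, j) = 'C(j.*2, j) * 'C(k + j, j.*2).
Proof.
have [le_jk|lt_kj] := leqP j k; last first.
  by rewrite (bin_small lt_kj) (@bin_small (k + j) j.*2) ?mul0n ?muln0 //; lia.
have fact_pos : 0 < j`! * j`! * (k - j)`! by rewrite !muln_gt0 !fact_gt0.
apply/eqP; rewrite -(eqn_pmul2r fact_pos); apply/eqP.
have e1 := bin_fact (leq_addl k j); rewrite addnK in e1.
have e2 := bin_fact le_jk.
have e3 : j.*2 <= k + j by rewrite -addnn leq_add2r.
have e4 := bin_fact e3; rewrite (_ : k + j - j.*2 = k - j) in e4; last by lia.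
have e5 := bin_fact (leq_addl j j); rewrite addnK addnn in e5.
transitivity (k + j)`!; first by rewrite -e1 -e2; ring.
by rewrite -e4 -e5; ring.
Qed.

Definition delannoy_coef (n j : nat) : nat := 'C(j.*2, j) * 'C(n + j, j.*2).

Lemma delannoy_coef0 n : delannoy_coef n 0 = 1.
Proof. by rewrite /delannoy_coef !bin0. Qed.

Lemma delannoy_coef_small n j : n < j -> delannoy_coef n j = 0.
Proof. by move=> lt_nj; rewrite /delannoy_coef (@bin_small (n + j)) ?muln0 //; lia. Qed.

Lemma mul_bin_central i : i.+1 * 'C(i.*2.+2, i.+1) = (2 * i + 1).*2 * 'C(i.*2, i).
Proof.
have h1 := mul_bin_diag i.*2.+2 i.
have h2 := mul_bin_down i.*2.+1 i.
rewrite /= (_ : i.*2.+1 - i = i.+1) in h2; last by lia.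
move: h1 h2; set X := 'C(_, i.+1); set Y := 'C(_, i); set W := 'C(_, i).
rewrite -!mul2n; nia.
Qed.

Lemma delannoy_coef_rec n i :
  n.+2 * delannoy_coef n.+2 i.+1 + n.+1 * delannoy_coef n i.+1 =
  (2 * n + 3) * delannoy_coef n.+1 i.+1 + (2 * n + 3).*2 * delannoy_coef n.+1 i.
Proof.
rewrite /delannoy_coef doubleS !addSn (addnS n i).
have central := mul_bin_central i.
have diag := mul_bin_diag (n + i).+2 i.*2; rewrite /= binS in diag.
rewrite (binS (n + i).+2 i.*2.+1) (binS (n + i).+1 i.*2.+1) (binS (n + i).+1 i.*2).
move: central diag.
set X := 'C(i.*2.+2, i.+1); set Y := 'C(i.*2, i).
set a1 := 'C((n + i).+1, i.*2.+2); set b1 := 'C((n + i).+1, i.*2.+1).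
set u := 'C((n + i).+1, i.*2) => central diag.
have diag_weighted : (2 * i + 1) * (b1 + n.+2 * u) = (i + 1) * (2 * n + 3) * u.
  transitivity ((i.*2).+1 * (b1 + u) + (2 * i + 1) * (n + 1) * u); first by rewrite -mul2n; ring.
  by rewrite -diag; ring.
have key : X * (b1 + n.+2 * u) = (2 * n + 3).*2 * (Y * u).
  apply/eqP; rewrite -(eqn_pmul2l (_ : 0 < (i + 1) * (2 * i + 1))); last by lia.
  apply/eqP; transitivity ((i.+1 * X) * ((2 * i + 1) * (b1 + n.+2 * u))).
    by rewrite addn1; ring.
  by rewrite central diag_weighted -!mul2n addn1; ring.
rewrite -key; ring.
Qed.

Lemma sum_bin_shift n j m : (j <= m)%N ->
  (\sum_(k < n) 'C(k + j, m) = 'C(n + j, m.+1))%N.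
Proof.
move=> le_jm; elim: n => [|n IHn]; first by rewrite big_ord0 bin_small.
by rewrite big_ord_recr /= IHn addSn binS addnC.
Qed.

Lemma prime_dvd_fact_small p n : prime p -> n < p -> ~~ (p %| n`!).
Proof.
move=> pr_p; elim: n => [|n IHn] lt_np; first by rewrite dvdn1 neq_ltn prime_gt1 ?orbT.
by rewrite factS Euclid_dvdM // gtnNdvd // IHn // ltnW.
Qed.

Lemma prime_dvd_bin_mid p n k : prime p ->
  k < p -> n - k < p -> p <= n -> p %| 'C(n, k).
Proof.
move=> pr_p lt_kp lt_nkp le_pn.
have: p %| 'C(n, k) * (k`! * (n - k)`!) by rewrite bin_fact ?dvdn_fact ?prime_gt0 //; lia.
by rewrite !Euclid_dvdM // !(negPf (prime_dvd_fact_small pr_p _)) ?orbF.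
Qed.

Local Open Scope ring_scope.

(** * Delannoy polynomials *)

Lemma delannoy_coefE n z :
  delannoy n z = \sum_(j < n.+1) (delannoy_coef n j)%:R * z ^+ j.
Proof. by apply: eq_bigr => j _; rewrite mul_bin_trinomial. Qed.

Lemma delannoy_widen N n z : (n < N)%N ->
  delannoy n z = \sum_(j < N) (delannoy_coef n j)%:R * z ^+ j.
Proof.
move=> lt_nN; rewrite delannoy_coefE -(subnKC lt_nN) big_split_ord /=.
rewrite [X in _ = _ + X]big1 ?addr0 // => j _.
by rewrite delannoy_coef_small ?mul0r //; lia.
Qed.

Lemma delannoy0 z : delannoy 0 z = 1.
Proof. by rewrite /delannoy big_ord1 /= expr0 mulr1. Qed.

Lemma delannoy1 z : delannoy 1 z = 2 * z + 1.
Proof. by rewrite /delannoy !big_ord_recr big_ord0 /= !bin0 !bin1 expr0 expr1; ring. Qed.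

Lemma delannoy_rec k z :
  k.+1%:R * delannoy k.+1 z + k%:R * delannoy k.-1 z =
  (2 * z + 1) * (2 * k + 1)%:R * delannoy k z.
Proof.
case: k => [|n]; first by rewrite delannoy0 delannoy1; ring.
set N := n.+3; pose a m j : int := (delannoy_coef m j)%:R.
have coef j : n.+2%:R * (a n.+2 j.+1 * z ^+ j.+1) + n.+1%:R * (a n j.+1 * z ^+ j.+1)
  = (2 * n + 3)%:R * (a n.+1 j.+1 * z ^+ j.+1)
    + 2 * (2 * n + 3)%:R * z * (a n.+1 j * z ^+ j).
  have := congr1 (fun m : nat => m%:R * z ^+ j.+1 : int) (delannoy_coef_rec n j).
  rewrite /a -[(2 * n + 3).*2]mul2n ?natrD ?natrM exprS => /eqP.
  rewrite -subr_eq0 => /eqP coef_eq.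
  by apply/eqP; rewrite -subr_eq0 -coef_eq; apply/eqP; ring.
have shifted m : (m < N)%N ->
    delannoy m z = 1 + \sum_(j < N) a m j.+1 * z ^+ j.+1.
  move=> lt_mN; rewrite (@delannoy_widen N.+1 m z (ltnW lt_mN)) big_ord_recl.
  by rewrite delannoy_coef0 expr0 mulr1.
have sums : n.+2%:R * \sum_(j < N) a n.+2 j.+1 * z ^+ j.+1
    + n.+1%:R * \sum_(j < N) a n j.+1 * z ^+ j.+1
  = (2 * n + 3)%:R * \sum_(j < N) a n.+1 j.+1 * z ^+ j.+1
    + 2 * (2 * n + 3)%:R * z * \sum_(j < N) a n.+1 j * z ^+ j.
  by rewrite !mulr_sumr -!big_split; apply: eq_bigr => j _; exact: coef.
have [ltN0 ltN1 ltN2] : [/\ (n < N)%N, (n.+1 < N)%N & (n.+2 < N)%N] by split; lia.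
have sumC : \sum_(j < N) a n.+1 j.+1 * z ^+ j.+1 = delannoy n.+1 z - 1.
  by rewrite (shifted n.+1 ltN1); ring.
rewrite /= (shifted n.+2 ltN2) (shifted n ltN0).
transitivity ((n.+2 + n.+1)%:R + (2 * n + 3)%:R * \sum_(j < N) a n.+1 j.+1 * z ^+ j.+1
    + 2 * (2 * n + 3)%:R * z * \sum_(j < N) a n.+1 j * z ^+ j).
  by rewrite natrD -addrA -sums; ring.
by rewrite sumC -(@delannoy_widen N n.+1 z ltN1); ring.
Qed.

Lemma delannoy_reflect k z : delannoy k (-1 - z) = (-1) ^+ k * delannoy k z.
Proof.
have recS n w : n.+2%:R * delannoy n.+2 w =
    (2 * w + 1) * (2 * n.+1 + 1)%:R * delannoy n.+1 w - n.+1%:R * delannoy n w.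
  by have /= rec := delannoy_rec n.+1 w; rewrite -rec; ring.
suff /(_ k)[] : forall n, delannoy n (-1 - z) = (-1) ^+ n * delannoy n z /\
    delannoy n.+1 (-1 - z) = (-1) ^+ n.+1 * delannoy n.+1 z by [].
elim=> [|n [IH0 IH1]].
  by rewrite !delannoy0 !delannoy1 expr0 mul1r expr1; split=> //; ring.
split=> //; apply: (mulfI (_ : n.+2%:R != 0 :> int)); first by rewrite pnatr_eq0.
by rewrite mulrCA !recS IH0 IH1 !exprS; ring.
Qed.

(** * Summation by parts and the coefficients e_j *)

Lemma sum_adjoint_recurrence (R : comPzRingType) (D f : nat -> R) (a : R) p :
  (forall k, k.+1%:R * D k.+1 + k%:R * D k.-1 = a * (2 * k + 1)%:R * D k) ->
  \sum_(k < p) D k * (k.+1%:R * f k.+1 + k%:R * f k.-1 - a * (2 * k + 1)%:R * f k)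
    = - (p%:R * (f p.-1 * D p - f p * D p.-1)).
Proof.
move=> rec; pose T k := k%:R * (f k.-1 * D k - f k * D k.-1).
have step k : D k * (k.+1%:R * f k.+1 + k%:R * f k.-1 - a * (2 * k + 1)%:R * f k)
    = - (T k.+1 - T k).
  have recD : k.+1%:R * D k.+1 = a * (2 * k + 1)%:R * D k - k%:R * D k.-1.
    by rewrite -rec; ring.
  rewrite /T /= (_ : _ * (f k * D k.+1 - _) = f k * (k.+1%:R * D k.+1) - k.+1%:R * f k.+1 * D k).
    by rewrite recD; ring.
  by ring.
under eq_bigr => k _ do rewrite step.
by rewrite sumrN -(big_mkord xpredT (fun k => T k.+1 - T k)) telescope_sumr // /T mul0r subr0.
Qed.

Lemma sum_nat_pairs (V : zmodType) (g : nat -> V) n :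
  \sum_(0 <= i < n.*2.+1) g i = g 0%N + \sum_(0 <= j < n) (g j.*2.+1 + g j.*2.+2).
Proof.
elim: n => [|n IHn]; first by rewrite big_nat1 big_geq ?addr0.
by rewrite doubleS big_nat_recr // big_nat_recr // IHn big_nat_recr // !addrA.
Qed.

Lemma ecoef_pair_expansion (R : comPzRingType) (x : R) w :
  (x + 1) * (x + 2) ^+ w.*2.+1 + (x - 1) * (x - 2) ^+ w.*2.+1
  = 2 * x ^+ w.*2.+2 + 4 * \sum_(j < w.+1) (ecoef j.+1 w.*2.+1)%:R * x ^+ (w - j).*2.
Proof.
set s := w.*2.+1.
pose g i := 'C(s, i)%:R * 2 ^+ i * x ^+ (s - i) * ((x + 1) + (-1) ^+ i * (x - 1)).
have expand : (x + 1) * (x + 2) ^+ s + (x - 1) * (x - 2) ^+ s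
    = \sum_(0 <= i < (w.+1).*2.+1) g i.
  rewrite doubleS big_nat_recr //= [g s.+1]/g bin_small // mulr0n !mul0r addr0.
  rewrite big_mkord /g !exprDn !big_distrr -big_split /=; apply: eq_bigr => i _.
  by rewrite (_ : -2 = -1 * 2 :> R) ?exprMn; ring.
rewrite expand sum_nat_pairs big_mkord /g subn0 bin0 expr0 !mul1r.
congr (_ + _); first by rewrite exprSr; ring.
rewrite big_distrr /=; apply: eq_bigr => j _.
have e1 : (s - j.*2.+1 = (w - j).*2)%N by rewrite /s; lia.
have shiftX : 'C(s, j.*2.+2)%:R * (x ^+ (s - j.*2.+2) * x) = 'C(s, j.*2.+2)%:R * x ^+ (w - j).*2 :> R.
  have [lt_jw|le_wj] := ltnP j w; last by rewrite bin_small ?mul0r // /s; lia.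
  by rewrite -exprSr; congr (_ * x ^+ _); rewrite /s; lia.
have ecoefE : (ecoef j.+1 s)%:R = 'C(s, j.*2.+2)%:R * 2 ^+ j.*2.+1 + 'C(s, j.*2.+1)%:R * 2 ^+ j.*2 :> R.
  have e2 : (2 * j.+1 = j.*2.+2)%N by lia.
  have e3 : (j.*2.+2 - 1 = j.*2.+1)%N by lia.
  have e4 : (j.*2.+2 - 2 = j.*2)%N by lia.
  by rewrite /ecoef e2 e3 e4 natrD natrM natrM !natrX.
have even_sign : (-1 : R) ^+ j.*2 = 1 by rewrite -mul2n exprM sqrrN !expr1n.
rewrite ecoefE e1 !exprS even_sign.
transitivity (4 * (2 ^+ j.*2 * ('C(s, j.*2.+1)%:R * x ^+ (w - j).*2
    + 2 * ('C(s, j.*2.+2)%:R * (x ^+ (s - j.*2.+2) * x))))); first by ring.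
by rewrite shiftX; ring.
Qed.

Section OddPowers.
Variable R : comPzRingType.
Local Notation x n := ((2 * n + 1)%:R : R).

Lemma odd_power_adjoint (c : R) k w :
  2 * (k.+1%:R * x k.+1 ^+ w.*2.+1 + k%:R * x k.-1 ^+ w.*2.+1
       - (2 * c + 1) * x k * x k ^+ w.*2.+1)
  = 4 * (\sum_(j < w.+1) (ecoef j.+1 w.*2.+1)%:R * x k ^+ (w - j).*2
         - c * x k ^+ w.*2.+2).
Proof.
have := ecoef_pair_expansion (x k) w.
have -> : x k + 1 = 2 * k.+1%:R by ring.
have -> : x k + 2 = x k.+1 by ring.
have -> : (x k - 1) * (x k - 2) ^+ w.*2.+1 = 2 * (k%:R * x k.-1 ^+ w.*2.+1).
  case: k => [|k]; first by ring.
  have -> : x k.+1 - 2 = x k by ring.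
  by rewrite /=; ring.
move=> expansion; rewrite [RHS]mulrBr (_ : 4 * \sum_(j < w.+1) _ =
    2 * k.+1%:R * x k.+1 ^+ w.*2.+1 + 2 * (k%:R * x k.-1 ^+ w.*2.+1) - 2 * x k ^+ w.*2.+2).
  by rewrite !exprS; ring.
by rewrite expansion; ring.
Qed.

End OddPowers.

(** * Power sums in characteristic p *)

Section PrimeCharacteristic.
Variables (F : fieldType) (p : nat).
Hypothesis pcharF : p \in [pchar F].

Lemma natf_neq0_lt n : (0 < n < p)%N -> n%:R != 0 :> F.
Proof. by case/andP=> n_gt0 lt_np; rewrite -(dvdn_pcharf pcharF) gtnNdvd. Qed.

Lemma bin_pred_pchar i : (i < p)%N -> 'C(p.-1, i)%:R = (-1) ^+ i :> F.
Proof.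
elim: i => [|i IHi] lt_ip; first by rewrite bin0 expr0.
have := congr1 (fun n => n%:R : F) (mul_bin_left p.-1 i); rewrite !natrM.
have -> : (p.-1 - i)%:R = - i.+1%:R :> F.
  have e : (p.-1 - i + i.+1 = p)%N by lia.
  by apply/eqP; rewrite -subr_eq0 opprK -natrD e (pcharf0 pcharF).
rewrite IHi 1?ltnW // => eq_i.
apply: (mulfI (natf_neq0_lt (_ : 0 < i.+1 < p)%N)); first exact/andP.
by rewrite eq_i exprS; ring.
Qed.

Lemma bin_addn_pchar i : (i < p)%N -> 'C(p + i, i)%:R = 1 :> F.
Proof.
elim: i => [|i IHi] lt_ip; first by rewrite bin0.
have := congr1 (fun n => n%:R : F) (mul_bin_diag (p + i.+1) i).
have -> : (p + i.+1).-1 = (p + i)%N by lia.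
rewrite !natrM IHi 1?ltnW //.
rewrite natrD (pcharf0 pcharF) add0r mulr1 => eq_i.
apply: (mulfI (natf_neq0_lt (_ : 0 < i.+1 < p)%N)); first exact/andP.
by rewrite -eq_i mulr1.
Qed.

End PrimeCharacteristic.

Section PowerSums.
Variables (F : fieldType) (p : nat) (z : int).
Hypotheses (pcharF : p \in [pchar F]) (odd_p : odd p).

Definition delannoy_power_sum v : F :=
  \sum_(k < p) (2 * k + 1)%:R ^+ (2 * v) * (delannoy k z)%:~R.

Local Notation S := delannoy_power_sum.

Lemma two_pchar_neq0 : 2 != 0 :> F.
Proof.
have p_gt1 := prime_gt1 (pcharf_prime pcharF).
have p_neq2 : p != 2%N by apply: contraTneq odd_p => ->.
by apply: (natf_neq0_lt pcharF); lia.
Qed.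

Lemma delannoy_power_sum_rec w :
  z%:~R * S w.+1 = \sum_(j < w.+1) (ecoef j.+1 w.*2.+1)%:R * S (w - j).
Proof.
set s := w.*2.+1; pose x k : F := (2 * k + 1)%:R; pose D k : F := (delannoy k z)%:~R.
have rec k : k.+1%:R * D k.+1 + k%:R * D k.-1 = (2 * z%:~R + 1) * (2 * k + 1)%:R * D k.
  have := congr1 (fun t : int => t%:~R : F) (delannoy_rec k z).
  by rewrite !intrD !intrM !mulrz_nat /D => ->; rewrite intrD intrM mulrz_nat rmorph1.
have := sum_adjoint_recurrence (fun k => x k ^+ s) p rec.
rewrite (pcharf0 pcharF) mul0r oppr0 => adjoint0.
have sumE : \sum_(j < w.+1) (ecoef j.+1 s)%:R * S (w - j)
    = \sum_(k < p) D k * \sum_(j < w.+1) (ecoef j.+1 s)%:R * x k ^+ (w - j).*2.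
  rewrite /S; under eq_bigr do rewrite mulr_sumr.
  rewrite exchange_big; apply: eq_bigr => k _; rewrite mulr_sumr.
  by apply: eq_bigr => j _; rewrite /x /D -mul2n; ring.
have zE : z%:~R * S w.+1 = \sum_(k < p) D k * (z%:~R * x k ^+ w.*2.+2).
  by rewrite /S mulr_sumr; apply: eq_bigr => k _; rewrite /x /D !mul2n doubleS; ring.
have key : 4 * (\sum_(j < w.+1) (ecoef j.+1 s)%:R * S (w - j) - z%:~R * S w.+1) = 0.
  transitivity (2 * \sum_(k < p) D k * (k.+1%:R * x k.+1 ^+ s + k%:R * x k.-1 ^+ s
      - (2 * z%:~R + 1) * (2 * k + 1)%:R * x k ^+ s)); last by rewrite adjoint0 mulr0.
  rewrite sumE zE -sumrB !mulr_sumr; apply: eq_bigr => k _.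
  by rewrite [RHS]mulrCA /x /s odd_power_adjoint; ring.
apply/eqP; rewrite eq_sym -subr_eq0; move/eqP: key; rewrite mulf_eq0 => /orP[|/eqP//].
by rewrite (_ : 4 = 2 * 2) ?mulf_eq0 ?orbb ?(negPf two_pchar_neq0) //; ring.
Qed.

Lemma delannoy_power_sum0 : S 0 = (- z%:~R) ^+ p./2.
Proof.
have pr_p := pcharf_prime pcharF.
have p_eq : p = (p./2).*2.+1 by rewrite -[p in LHS]odd_double_half odd_p add1n.
set m := p./2 in p_eq *; have lt_mp : (m < p)%N by lia.
have S0E : S 0 = \sum_(j < p) ('C(j.*2, j) * 'C(p + j, j.*2.+1))%:R * z%:~R ^+ j.
  rewrite /S; under eq_bigr => k _.
    rewrite muln0 expr0 mul1r (@delannoy_widen p k z (ltn_ord k)) rmorph_sum; over.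
  rewrite exchange_big /=; apply: eq_bigr => j _.
  rewrite -sum_bin_shift; last by rewrite -addnn leq_addr.
  rewrite natrM natr_sum mulr_sumr mulr_suml; apply: eq_bigr => k _.
  by rewrite rmorphM rmorph_nat rmorphXn natrM.
have vanish j : (j < p)%N -> j != m -> (p %| 'C(j.*2, j) * 'C(p + j, j.*2.+1))%N.
  move=> lt_jp ne_jm; have [lt_jp2|le_pj2] := ltnP j.*2.+1 p.
    by apply: dvdn_mull; apply: prime_dvd_bin_mid => //; lia.
  by apply: dvdn_mulr; apply: prime_dvd_bin_mid => //; lia.
rewrite S0E (bigD1 (Ordinal lt_mp)) //= big1 ?addr0 => [|j ne_jm]; last first.
  by apply/eqP; rewrite mulf_eq0 -(dvdn_pcharf pcharF) vanish.
have -> : m.*2 = p.-1 by lia.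
rewrite prednK ?prime_gt0 //.
have -> : 'C(p + m, p) = 'C(p + m, m) by rewrite -bin_sub ?leq_addr // addKn.
by rewrite natrM bin_pred_pchar // bin_addn_pchar // mulr1 -exprMn mulN1r.
Qed.

End PowerSums.

(** * Euler's criterion *)

Section EulerCriterion.
Variable F : finFieldType.
Hypothesis odd_card : odd #|F|.

Lemma expf_card_pred (a : F) : a != 0 -> a ^+ #|F|.-1 = 1.
Proof.
move=> a_neq0; apply: (mulfI a_neq0).
by rewrite -exprS prednK ?expf_card ?mulr1 // (ltnW (finNzRing_gt1 F)).
Qed.

Lemma card_pred_half : #|F|.-1 = (#|F|./2).*2.
Proof. by rewrite -[in LHS](odd_double_half #|F|) odd_card. Qed.

Lemma finField_prim_root : exists g : F, #|F|.-1.-primitive_root g.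
Proof.
have n_gt0 : (0 < #|F|.-1)%N by rewrite ltn_predRL finNzRing_gt1.
have roots : all #|F|.-1.-unity_root (enum (predC1 (0 : F))).
  by apply/allP => x; rewrite mem_enum unity_rootE => /expf_card_pred ->.
have size_roots : (#|F|.-1 <= size (enum (predC1 (0%R : F))))%N.
  by rewrite -cardE cardC1.
have /hasP[g _ prim_g] := has_prim_root n_gt0 roots (enum_uniq _) size_roots.
by exists g.
Qed.

Lemma euler_criterion (a : F) :
  a != 0 -> (a ^+ #|F|./2 == 1) = [exists y : F, y ^+ 2 == a].
Proof.
move=> a_neq0; apply/idP/existsP => [/eqP a_half|[y /eqP y2_eq]]; last first.
  have y_neq0 : y != 0 by apply: contraNneq a_neq0 => y0; rewrite -y2_eq y0 expr0n.
  by rewrite -y2_eq -exprM mul2n -card_pred_half expf_card_pred.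
have [g prim_g] := finField_prim_root.
have [i0 a_eq] := prim_rootP prim_g (expf_card_pred a_neq0).
move: (nat_of_ord i0) a_eq => i a_eq.
have : (#|F|.-1 %| i * #|F|./2)%N by rewrite (prim_order_dvd prim_g) exprM -a_eq a_half.
rewrite card_pred_half -mul2n dvdn_pmul2r; last first.
  by rewrite -double_gt0 -card_pred_half ltn_predRL finNzRing_gt1.
by case/dvdnP=> k i_eq; exists (g ^+ k); rewrite a_eq i_eq -exprM mulnC.
Qed.

Lemma euler_criterion_nonresidue (a : F) :
  a != 0 -> ~~ [exists y : F, y ^+ 2 == a] -> a ^+ #|F|./2 = -1.
Proof.
move=> a_neq0; rewrite -euler_criterion // => a_half_neq1.
have : (a ^+ #|F|./2) ^+ 2 == 1 by rewrite -exprM mulnC mul2n -card_pred_half expf_card_pred.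
by rewrite sqrf_eq1 (negPf a_half_neq1) => /eqP.
Qed.

End EulerCriterion.

Section Legendre.
Variable p : nat.
Hypothesis pr_p : prime p.

Lemma Fp_square_exists (a : int) :
  [exists x : 'I_p, (p%:Z %| x%:Z ^+ 2 - a)%Z] = [exists y : 'F_p, y ^+ 2 == a%:~R].
Proof.
have pchar := pchar_Fp pr_p.
apply/existsP/existsP => [[x]|[y /eqP y2_eq]].
  by rewrite (dvdz_pcharf pchar) rmorphB rmorphXn subr_eq0 => x2_eq; exists x%:R.
have lt_yp : (y < p)%N by rewrite -[p in (_ < p)%N](Fp_cast pr_p) ltn_ord.
exists (Ordinal lt_yp); rewrite (dvdz_pcharf pchar) rmorphB rmorphXn subr_eq0 /=.
by rewrite -y2_eq [X in X ^+ 2](_ : _ = y) //; exact: natr_Zp.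
Qed.

Lemma legendre_Fp (a : int) : odd p -> ~~ (p%:Z %| a)%Z ->
  (legendre a p)%:~R = (a%:~R : 'F_p) ^+ p./2.
Proof.
move=> odd_p pNa.
have a_neq0 : (a%:~R : 'F_p) != 0 by rewrite -(dvdz_pcharf (pchar_Fp pr_p)).
have odd_card : odd #|'F_p| by rewrite card_Fp.
have criterion := euler_criterion odd_card a_neq0.
have nonresidue := euler_criterion_nonresidue odd_card a_neq0.
rewrite card_Fp // in criterion nonresidue.
rewrite /legendre (negPf pNa) Fp_square_exists -criterion.
case: eqP => [->|/eqP a_half]; first by rewrite rmorph1.
by rewrite rmorphN1 nonresidue // -criterion.
Qed.

End Legendre.

(** * The coefficients c_v *)

Lemma size_cs w n : size (cs w n) = n.+1.
Proof. by elim: n => [|n IHn] //=; rewrite size_rcons IHn. Qed.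

Lemma nth_cs w n i : (i <= n)%N -> (cs w n)`_i = (cs w i)`_i.
Proof.
elim: n => [|n IHn] le_in; first by case: i le_in.
have [lt_in|le_ni] := ltnP i n.+1; first by rewrite /= nth_rcons size_cs lt_in IHn.
by have -> : i = n.+1 by lia.
Qed.

Lemma cs_rec w n : (cs w n.+1)`_n.+1
  = w * \sum_(j < n.+1) (ecoef j.+1 n.*2.+1)%:R * (cs w (n - j))`_(n - j).
Proof.
rewrite /= nth_rcons size_cs ltnn eqxx /c_step size_cs big_add1 /= big_mkord.
rewrite (_ : 2 * n.+1 - 1 = n.*2.+1)%N; last by lia.
congr (_ * _); apply: eq_bigr => j _.
by rewrite subSS nth_cs // leq_subr.
Qed.

(* The rational c_v z^v is an integer (cc_scaled); cc_num names it. *)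
Definition cc_num (z : int) v : int := numq (cc z v * z%:~R ^+ v).

Section ScaledCoefficients.
Variable z : int.
Hypothesis z_neq0 : z != 0.

Lemma cc_scaled_rec w : cc z w.+1 * z%:~R ^+ w.+1 = \sum_(j < w.+1)
    (ecoef j.+1 w.*2.+1)%:R * z%:~R ^+ j * (cc z (w - j) * z%:~R ^+ (w - j)).
Proof.
have zq_neq0 : (z%:~R : rat) != 0 by rewrite intr_eq0.
rewrite /cc cs_rec -mulrA mulr_suml mulr_sumr; apply: eq_bigr => j _.
have split_w : z%:~R ^+ w = z%:~R ^+ j * z%:~R ^+ (w - j) :> rat.
  by rewrite -exprD subnKC // -ltnS.
by rewrite exprS split_w; field.
Qed.

Lemma cc_scaled v : cc z v * z%:~R ^+ v = (cc_num z v)%:~R.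
Proof.
elim/ltn_ind: v => -[_|w IHw]; first by rewrite /cc_num /cc /= !mulr1 (numq_int 1).
have IHj (j : 'I_w.+1) : cc z (w - j) * z%:~R ^+ (w - j) = (cc_num z (w - j))%:~R.
  by apply: IHw; rewrite ltnS leq_subr.
rewrite /cc_num cc_scaled_rec; under eq_bigr => j _ do rewrite IHj.
set M : int := \sum_(j < w.+1) (ecoef j.+1 w.*2.+1)%:R * z ^+ j * cc_num z (w - j).
have -> : \sum_(j < w.+1) (ecoef j.+1 w.*2.+1)%:R * z%:~R ^+ j * (cc_num z (w - j))%:~R
    = M%:~R :> rat.
  by rewrite rmorph_sum; apply: eq_bigr => j _; rewrite !rmorphM rmorph_nat rmorphXn.
by rewrite numq_int.
Qed.

Lemma cc_num_rec w :
  cc_num z w.+1 = \sum_(j < w.+1) (ecoef j.+1 w.*2.+1)%:R * z ^+ j * cc_num z (w - j).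
Proof.
apply: (@intr_inj rat); rewrite -cc_scaled cc_scaled_rec rmorph_sum.
by apply: eq_bigr => j _; rewrite cc_scaled !rmorphM rmorph_nat rmorphXn.
Qed.

Lemma delannoy_power_sum_scaled (F : fieldType) p v :
  p \in [pchar F] -> odd p ->
  z%:~R ^+ v * delannoy_power_sum F p z v = (cc_num z v)%:~R * (- z%:~R) ^+ p./2.
Proof.
move=> pcharF odd_p; elim/ltn_ind: v => -[_|w IHw].
  by rewrite expr0 mul1r delannoy_power_sum0 // /cc_num /cc /= !mulr1 (numq_int 1) mul1r.
rewrite exprSr -mulrA delannoy_power_sum_rec // mulr_sumr cc_num_rec rmorph_sum mulr_suml.
apply: eq_bigr => j _; have le_jw : (j <= w)%N by rewrite -ltnS.
rewrite !rmorphM rmorph_nat rmorphXn -[in RHS]mulrA -IHw ?ltnS ?leq_subr //.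
by rewrite -{1}(subnKC le_jw) exprD; ring.
Qed.

End ScaledCoefficients.

Lemma dvdz_numq_scaled (q : int) (x : rat) (d a : int) :
  coprimez q d -> (q %| a)%Z -> x * d%:~R = a%:~R -> (q %| numq x)%Z.
Proof.
move=> qd_coprime q_dvd_a xd_eq.
have num_eq : numq x * d = a * denq x.
  by apply: (@intr_inj rat); rewrite !intrM numqE -xd_eq; ring.
by rewrite -(Gauss_dvdzl _ qd_coprime) num_eq dvdz_mulr.
Qed.

Lemma delannoy_power_sum_congr p v z : prime p -> odd p -> coprimez p z ->
  ratcong p ((\sum_(k < p) ((2 * k + 1) ^ (2 * v))%N%:R * delannoy k z : int)%:~R)
            (cc z v * (legendre (- z) p)%:~R).
Proof.
move=> pr_p odd_p pz_coprime.
have pNz : ~~ (p%:Z %| - z)%Z.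
  rewrite dvdzE abszN -dvdzE; apply: contraTN pz_coprime => p_dvd_z.
  have : (p%:Z %| gcdz p z)%Z by rewrite dvdz_gcd dvdzz p_dvd_z.
  by apply: contraL => /eqP ->; rewrite dvdz1 /= gtn_eqF ?prime_gt1.
have z_neq0 : z != 0 by apply: contraNneq pNz => ->; rewrite oppr0 dvdz0.
set S : int := \sum_(k < p) _; set L := legendre (- z) p.
have SF : (S%:~R : 'F_p) = delannoy_power_sum 'F_p p z v.
  by rewrite rmorph_sum; apply: eq_bigr => k _; rewrite rmorphM rmorph_nat natrX.
have LF : (L%:~R : 'F_p) = (- z%:~R) ^+ p./2 by rewrite legendre_Fp // rmorphN.
rewrite /ratcong; apply: (@dvdz_numq_scaled _ _ (z ^+ v) (z ^+ v * S - cc_num z v * L)).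
- by apply: coprimezXr.
- rewrite (dvdz_pcharf (pchar_Fp pr_p)) intrB !intrM rmorphXn SF LF.
  by rewrite delannoy_power_sum_scaled // ?pchar_Fp // subrr.
- by rewrite intrB !intrM rmorphXn -(cc_scaled z_neq0); ring.
Qed.

Theorem theorem1p2 (p : nat) (v : nat) (z : int) :
  prime p -> odd p -> z != 0 -> z != -1 ->
  ((gcdz p%:Z z == 1)%N ->
     ratcong p ((\sum_(k < p) ((2 * k + 1) ^ (2 * v))%N%:R * delannoy k z : int)%:~R)
               (cc z v * (legendre (- z) p)%:~R)) /\
  ((gcdz p%:Z (z + 1) == 1)%N ->
     ratcong p ((\sum_(k < p) (-1) ^+ k * ((2 * k + 1) ^ (2 * v))%N%:R * delannoy k z : int)%:~R)
               (cct z v * (legendre (z + 1) p)%:~R)).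
Proof.
(* z != 0 and z != -1 already follow from the coprimality hypotheses. *)
move=> pr_p odd_p _ _; split; first exact: delannoy_power_sum_congr.
move=> pz1_coprime; have reflect_z : -1 - z = - (z + 1) by ring.
have := @delannoy_power_sum_congr p v (-1 - z) pr_p odd_p.
rewrite reflect_z /coprimez gcdzN opprK => /(_ pz1_coprime).
rewrite (_ : cc (- (z + 1)) v = cct z v); last by rewrite /cc /cct intrN invrN.
congr (ratcong _ _%:~R _); apply: eq_bigr => k _.
by rewrite -reflect_z delannoy_reflect; ring.
Qed.
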